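(* Let $L$ be a friendly labeling function, $T$ a tree with root edge, and $e$ an interior edge of $T$. If $(l_1,m,n_1)$ and $(l_2,m,n_2)$ are consistent labelings of $T$ (same label $m$ on $e$), then $(l_1,m,n_2)$ and $(l_2,m,n_1)$ are consistent labelings of $T$ and the quadratic binomial $$q_{(l_1,m,n_1)}\,q_{(l_2,m,n_2)}-q_{(l_1,m,n_2)}\,q_{(l_2,m,n_1)}$$ lies in the toric ideal $I_{T,L}$.
   Context: Let $G$ be a finite abelian group written additively, $\mathcal{L}$ a finite set, $L:G\to\mathcal{L}$ a function. A tree with root edge is a finite tree $T$ with a distinguished leaf $\rho$; the edge at $\rho$ is the root edge. Every vertex $v\neq\rho$ has a unique parent edge (first edge on the path from $v$ to $\rho$); other edges at $v$ are child edges. Vertices that are neither $\rho$ nor leaves are interior vertices; an edge is interior if both endpoints are interior vertices. $E(T)$ is the edge set. An edge $e'$ is below $e$ if $e$ lies on the path from $\rho$ to $e'$ (so $e$ is below itself). A map $h:E(T)\to G$ is a consistent assignment if for every interior vertex $v$, $h(\text{parent edge of }v)=\sum h(\text{child edges of }v)$. ${\rm im}(L^T)=\{L\circ h: h\text{ consistent}\}$ is the set of consistent labelings. $I_{T,L}$ is the kernel of $\mathbb{C}[q_\lambda:\lambda\in{\rm im}(L^T)]\to\mathbb{C}[a^{(e)}_l:e\in E(T),l\in\mathcal{L}]$, $q_\lambda\mapsto\prod_{e\in E(T)}a^{(e)}_{\lambda(e)}$. For an edge $e$, $T_{e,-}$ is the tree formed by the edges below $e$ and $T_{e,+}$ the tree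 formed by $e$ and all edges not below $e$. A labeling of $T$ is written as a triple $(l,m,n)$, where $l$ is its restriction to the edges of $T_{e,-}$ other than $e$, $m$ its value on $e$, and $n$ its restriction to the edges of $T_{e,+}$ other than $e$. Friendliness: for $m\ge3$ let $Z_m=\{(g_1,\dots,g_m)\in G^m: g_1+\cdots+g_{m-1}=g_m\}$ and $\widetilde{L}(g_1,\dots,g_m)=(L(g_1),\dots,L(g_m))$; $L$ is $m$-friendly if for every $l\in\widetilde{L}(Z_m)$ and every $i$, the set of $i$-th coordinates of elements of $\widetilde{L}^{-1}(l)$ equals $L^{-1}(l_i)$; $L$ is friendly if it is $m$-friendly for all $m\ge3$. *)

From mathcomp Require Import all_boot all_algebra.
From mathcomp Require Import Rstruct.
From mathcomp.real_closed Require Import complex.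
From mathcomp.multinomials Require Export mpoly.
From Stdlib Require Rdefinitions.

Set Implicit Arguments.
Unset Strict Implicit.
Unset Printing Implicit Defensive.

Import GRing.Theory.
Local Open Scope ring_scope.

Definition CC : fieldType := complex Rdefinitions.R.

(* A finite tree T with a distinguished leaf rho is encoded by its vertex   *)
(* type V, the vertex rho, and the map par : V -> V sending every vertex    *)
(* v <> rho to the other endpoint of its parent edge (the first edge on the *)
(* path from v to rho).  The edges of T are then in bijection with the      *)
(* vertices v <> rho (v <-> {v, par v}).                                    *)

Section Tree.
Variables (V : finType) (rho : V) (par : V -> V).

(* every vertex reaches rho by following parents (connected + acyclic),   *)
(* and rho is a leaf (it has exactly one neighbour).                       *)
Definition is_root_edge_tree : Prop :=
  (forall v : V, exists k, iter k par v = rho) /\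
  #|[set v : V | (v != rho) && (par v == rho)]| = 1%N.

(* the edge set E(T): the edge {v, par v} is represented by v *)
Definition edge := {v : V | v != rho}.

Definition child_edge (v : V) (e : edge) : bool := par (val e) == v.

(* interior vertex: neither rho nor a leaf, i.e. v <> rho and v has a child *)
Definition interior_vertex (v : V) : bool :=
  (v != rho) && [exists e : edge, child_edge v e].

Definition interior_edge (e : edge) : bool :=
  interior_vertex (val e) && interior_vertex (par (val e)).

(* e' is below e : e lies on the path from rho to e' (e is below itself), *)
(* In a tree the depth is < #|V|, so bounding the iteration is harmless.   *)
Definition belowb (e' e : edge) : bool :=
  [exists k : 'I_#|V|.+1, iter k par (val e') == val e].

Variable (G : finZmodType).

(* consistent assignment: at every interior vertex v (which is val e for   *)
(* its parent edge e), h(parent edge) = sum of h(child edges).             *)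
Definition consistent (h : {ffun edge -> G}) : bool :=
  [forall e : edge, interior_vertex (val e) ==>
      (h e == \sum_(f : edge | child_edge (val e) f) h f)].

Variables (Lab : finType) (L : G -> Lab).

Definition consistent_labelings : {set {ffun edge -> Lab}} :=
  [set lam | [exists h : {ffun edge -> G},
                consistent h && (lam == [ffun e => L (h e)])]].

(* splicing: the labeling (l1, m, n2) built from lam1 = (l1,m,n1) and     *)
(* lam2 = (l2,m,n2): it agrees with lam1 on T_{e,-} and with lam2 on the    *)
(* edges of T_{e,+} other than e.                                          *)
Definition splice (e : edge) (lam1 lam2 : {ffun edge -> Lab})
  : {ffun edge -> Lab} :=
  [ffun f => if belowb f e then lam1 f else lam2 f].

Definition imT := {lam : {ffun edge -> Lab} | lam \in consistent_labelings}.
Definition nq : nat := #|{: imT}|.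
Definition qvar (lam : imT) : {mpoly CC[nq]} := 'X_(enum_rank lam).

Definition na : nat := #|{: edge * Lab}|.
Definition avar (e : edge) (l : Lab) : {mpoly CC[na]} := 'X_(enum_rank (e, l)).

Definition toric_map (p : {mpoly CC[nq]}) : {mpoly CC[na]} :=
  mmap (@mpolyC na CC)
       (fun i : 'I_nq => \prod_(e : edge) avar e (val (enum_val i) e)) p.

Definition in_toric_ideal (p : {mpoly CC[nq]}) : Prop := toric_map p = 0.

End Tree.

Section Friendly.
Variables (G : finZmodType) (Lab : finType) (L : G -> Lab).

(* Z_m = {(g_1,...,g_m) : g_1 + ... + g_{m-1} = g_m}; coordinates 0..m-1 *)
Definition Zm (m : nat) (g : {ffun 'I_m -> G}) : bool :=
  \sum_(i < m | (i.+1 < m)%N) g i == \sum_(i < m | (i.+1 == m)%N) g i.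

Definition Ltilde (m : nat) (g : {ffun 'I_m -> G}) : {ffun 'I_m -> Lab} :=
  [ffun i => L (g i)].

Definition m_friendly (m : nat) : Prop :=
  forall l : {ffun 'I_m -> Lab},
    (exists g, Zm g /\ Ltilde g = l) ->
    forall (i : 'I_m) (x : G),
      (exists g, [/\ Zm g, Ltilde g = l & g i = x]) <-> L x = l i.

Definition friendly : Prop := forall m : nat, (3 <= m)%N -> m_friendly m.

End Friendly.

From mathcomp Require Import all_boot all_algebra.
From mathcomp.multinomials Require Import mpoly.

(* Friendliness says that at a single vertex the value on any one incident edge
   may be replaced by any group element with the same label, at the price of
   readjusting the other incident edges without changing their labels.
   Propagating such a replacement through the tree (into every subtree hanging
   below the vertex, and towards the root) shows that a consistent assignment
   can be made to take any value of the prescribed label on a given edge while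
   all labels stay the same.  If h1 and h2 realise (l1,m,n1) and (l2,m,n2),
   move h2 so that it agrees with h1 on e and paste h1 below e: the result is
   consistent and realises (l1,m,n2).  Both monomials of the binomial then map
   to the same product of a-variables, edge by edge. *)

Set Implicit Arguments.
Unset Strict Implicit.
Unset Printing Implicit Defensive.

Import GRing.Theory.

Section RootedMap.
Variables (V : finType) (rho : V) (p : V -> V).
Hypotheses (p_rho : p rho = rho) (p_reach : forall v, exists k, iter k p v = rho).

Definition below (w v : V) : bool := fconnect p w v.

Lemma belowP w v : reflect (exists k, iter k p w = v) (below w v).
Proof.
apply: (iffP idP) => [wv|[k <-]]; last exact: fconnect_iter.
by exists (findex p w v); apply: iter_findex.
Qed.

Lemma below_refl v : below v v. Proof. exact: connect0. Qed.

Lemma below_trans u v w : below u v -> below v w -> below u w.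
Proof. exact: connect_trans. Qed.

Lemma below_parent v : below v (p v). Proof. exact: fconnect1. Qed.

Lemma belowE c v : below c v = (c == v) || below (p c) v.
Proof.
apply/idP/orP => [|[/eqP <-|]]; last 2 first.
- exact: below_refl.
- exact: below_trans (below_parent c).
case/belowP => [[|k]] /= ckv; first by left; rewrite ckv.
by right; apply/belowP; exists k; rewrite -iterSr.
Qed.

Lemma below_total w a b : below w a -> below w b -> below a b || below b a.
Proof.
case/belowP => i <-; case/belowP => j <-.
case: (leqP i j) => [le_ij|lt_ji]; apply/orP; [left|right]; apply/belowP.
  by exists (j - i); rewrite -iterD subnK.
by exists (i - j); rewrite -iterD subnK // ltnW.
Qed.

Lemma below_step w q : below w q -> w != q -> exists2 c, p c = q & below w c.
Proof.
case/belowP => [[|k]] /=; first by move=> ->; rewrite eqxx.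
by move=> wq _; exists (iter k p w) => //; apply/belowP; exists k.
Qed.

Lemma not_below_parent c : c != rho -> ~~ below (p c) c.
Proof.
move=> c_rho; apply/belowP => -[k pcc].
have per n : iter (n * k.+1) p c = c.
  by elim: n => [//|n IH]; rewrite mulSn iterD IH iterSr.
have [K cK] := p_reach c.
have iter_rho j : iter j p rho = rho by apply: iter_fix.
move: c_rho; rewrite -(per K) -(subnK (leq_pmulr K (ltn0Sn k))) iterD cK.
by rewrite iter_rho eqxx.
Qed.

Lemma below_child_uniq w c1 c2 : c1 != rho -> c2 != rho -> p c1 = p c2 ->
  below w c1 -> below w c2 -> c1 = c2.
Proof.
move=> c1_rho c2_rho pc12 wc1 wc2; case: (eqVneq c1 c2) => // c12.
case/orP: (below_total wc1 wc2); rewrite belowE.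
  by rewrite (negbTE c12) pc12 (negbTE (not_below_parent c2_rho)).
by rewrite eq_sym (negbTE c12) -pc12 (negbTE (not_below_parent c1_rho)).
Qed.

End RootedMap.

Local Open Scope ring_scope.

Section Friendliness.
Variables (G : finZmodType) (Lab : finType) (L : G -> Lab).
Hypothesis L_friendly : friendly L.

Lemma ZmE n (g : {ffun 'I_n.+1 -> G}) :
  Zm g = (\sum_(i < n) g (lift ord_max i) == g ord_max).
Proof.
rewrite /Zm [X in _ == X](big_pred1 ord_max) => [|i]; last by rewrite /= eqSS.
rewrite big_mkcond big_ord_recr /= ltnn addr0; congr (_ == _).
apply: eq_bigr => i _; rewrite ltnS ltn_ord.
by congr (g _); apply/val_inj; rewrite /= /bump leqNgt ltn_ord.
Qed.

(* [friendly] only constrains [m >= 3]; for [m = 2] both coordinates agree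
   and a constant vector does the job. *)
Lemma Zm_relabel n (g : {ffun 'I_n.+1 -> G}) i x : (0 < n)%N -> Zm g ->
  L x = L (g i) ->
  exists2 g' : {ffun 'I_n.+1 -> G}, Zm g' & Ltilde L g' = Ltilde L g /\ g' i = x.
Proof.
case: n g i => [//|[|n]] g i _ Zg Lx; last first.
  have [_ /(_ _)[|g' [Zg' Lg' g'i]]] := L_friendly (isT : 3 <= n.+3)%N
    (ex_intro _ g (conj Zg erefl)) i x; first by rewrite ffunE.
  by exists g'.
have g_const j : g j = g ord_max.
  move: Zg; rewrite ZmE big_ord1 => /eqP g0.
  by case: (unliftP ord_max j) => [k ->|->]; rewrite ?ord1.
exists [ffun => x]; first by rewrite ZmE big_ord1 !ffunE.
by split; [apply/ffunP => j; rewrite !ffunE Lx !g_const | rewrite ffunE].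
Qed.

Lemma friendly_relabel_sum (I : finType) (P : pred I) (top a : I)
    (u : {ffun I -> G}) x :
  ~~ P top -> (exists i, P i) -> u top = \sum_(i in P) u i ->
  (a == top) || P a -> L x = L (u a) ->
  exists u' : {ffun I -> G}, [/\ forall i, L (u' i) = L (u i), u' a = x &
    u' top = \sum_(i in P) u' i].
Proof.
move=> Ptop [i0 Pi0] u_top a_in Lx.
pose rk := enum_rank_in (Pi0 : i0 \in P).
pose t : {ffun 'I_#|P|.+1 -> G} :=
  [ffun j => oapp (fun k => u (enum_val k)) (u top) (unlift ord_max j)].
have t_lift k : t (lift ord_max k) = u (enum_val k) by rewrite ffunE liftK.
have t_max : t ord_max = u top by rewrite ffunE unlift_none.
have Zt : Zm t.
  rewrite ZmE t_max u_top; apply/eqP; rewrite [RHS]big_enum_val.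
  by apply: eq_bigr => k _; rewrite t_lift.
pose j0 := if a == top then ord_max else lift ord_max (rk a).
have Pa : a != top -> P a by move=> /negbTE a_top; move: a_in; rewrite a_top.
have t_j0 : t j0 = u a.
  rewrite /j0; case: eqP => [->//|/eqP a_top].
  by rewrite t_lift enum_rankK_in //; apply: Pa.
have P_gt0 : (0 < #|P|)%N by apply/card_gt0P; exists i0.
have [g' Zg' [Lg' g'j0]] := Zm_relabel P_gt0 Zt (etrans Lx (congr1 L (esym t_j0))).
have Lg j : L (g' j) = L (t j) by move/ffunP: Lg' => /(_ j); rewrite !ffunE.
exists [ffun i => if i == top then g' ord_max
                 else if P i then g' (lift ord_max (rk i)) else u i]; split.
- move=> i; rewrite ffunE; case: eqP => [->|_]; first by rewrite Lg t_max.
  by case: ifP => // Pi; rewrite Lg t_lift enum_rankK_in.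
- by rewrite ffunE -g'j0 /j0; case: eqP => [//|/eqP/Pa ->].
- rewrite ffunE eqxx big_enum_val; move: Zg'; rewrite ZmE => /eqP <-.
  apply: eq_bigr => k _; have Pk : P (enum_val k) := enum_valP k.
  rewrite ffunE Pk /rk enum_valK_in.
  by case: eqP => [Ek|//]; move: Ptop; rewrite -Ek Pk.
Qed.

End Friendliness.

Section RootEdgeTree.
Variables (V : finType) (rho : V) (par : V -> V).
Hypothesis T_tree : is_root_edge_tree rho par.

(* The encoding leaves [par rho] arbitrary; [parent] makes [rho] a fixed
   point, so that [below parent] is the ancestor relation of the tree. *)
Definition parent (v : V) : V := if v == rho then rho else par v.

Lemma parent_rho : parent rho = rho. Proof. by rewrite /parent eqxx. Qed.

Lemma parent_par v : v != rho -> parent v = par v.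
Proof. by rewrite /parent => /negbTE ->. Qed.

Lemma iter_parent_par k w : iter k parent w != rho -> iter k par w = iter k parent w.
Proof.
elim: k => [//|k IH] /=; case: (eqVneq (iter k parent w) rho) => [->|wk].
  by rewrite parent_rho eqxx.
by move=> _; rewrite (IH wk) parent_par.
Qed.

Lemma parent_reach v : exists k, iter k parent v = rho.
Proof.
have [k vk] := T_tree.1 v; exists k.
case: (eqVneq (iter k parent v) rho) => // vk'.
by move: (vk'); rewrite -(iter_parent_par vk') vk eqxx.
Qed.

Lemma below_root_child v w : v != rho -> parent v = rho -> w != rho -> below parent w v.
Proof.
move=> v_rho pv.
have [r root_r] : exists r, forall u, u != rho -> parent u = rho -> u = r.
  case: T_tree => _ /eqP/cards1P[r r_only]; exists r => u u_rho pu.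
  by apply/set1P; rewrite -r_only inE u_rho -(parent_par u_rho) pu /=.
rewrite (root_r v) //; have [k] := parent_reach w.
elim: k w => [|k IH] w; first by move=> /= ->; rewrite eqxx.
rewrite iterSr => wk w_rho.
case: (eqVneq (parent w) rho) => [pw|pw_rho]; first by rewrite (root_r w) ?below_refl.
exact: below_trans (below_parent _ _) (IH _ wk pw_rho).
Qed.

Lemma iter_par_parent k w :
  iter k par w = iter k parent w \/ fconnect par rho (iter k par w).
Proof.
elim: k => [|k [IH|IH]] /=; first by left.
  rewrite IH; case: (eqVneq (iter k parent w) rho) => [->|wk].
    by right; apply: fconnect1.
  by left; rewrite parent_par.
by right; apply: connect_trans IH (fconnect1 _ _).
Qed.

Lemma fconnect_par_parent w v : v != rho -> ~~ fconnect par rho v ->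
  fconnect par w v = below parent w v.
Proof.
move=> v_rho rho_v; apply/idP/belowP => [wv|[k wk]].
  exists (findex par w v); have := iter_findex wv.
  case: (iter_par_parent (findex par w v) w) => [<-//|].
  by move=> + wk; rewrite wk (negbTE rho_v).
by rewrite -wk -iter_parent_par ?wk // fconnect_iter.
Qed.

Local Notation E := (edge rho).
Local Notation child q := (child_edge par (val q)).

Lemma belowb_fconnect (f e : E) : belowb par f e = fconnect par (val f) (val e).
Proof.
apply/existsP/idP => [[k /eqP <-]|fe]; first exact: fconnect_iter.
have k_lt : (findex par (val f) (val e) < #|V|.+1)%N.
  by rewrite ltnS ltnW // (leq_trans (findex_max fe)) ?max_card.
by exists (Ordinal k_lt); rewrite /= iter_findex.
Qed.

Definition under (f e : E) : bool := below parent (val f) (val e).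

Lemma belowb_under (e f : E) :
  ~~ fconnect par rho (val e) -> belowb par f e = under f e.
Proof. by move=> rho_e; rewrite belowb_fconnect fconnect_par_parent ?(valP e). Qed.

(* [belowb] iterates [par] itself: when [par rho] leads back up to [e], every
   edge counts as below [e]. *)
Lemma splice_degenerate (e : E) (Lab : finType) (lam1 lam2 : {ffun E -> Lab}) :
  fconnect par rho (val e) -> splice par e lam1 lam2 = lam1.
Proof.
move=> rho_e; apply/ffunP => f; rewrite ffunE belowb_fconnect.
have [k fk] := T_tree.1 (val f).
have := fconnect_iter par k (val f); rewrite fk => f_rho.
by rewrite (connect_trans f_rho rho_e).
Qed.

Lemma child_parent (q c : E) : child q c = (parent (val c) == val q).
Proof. by rewrite /child_edge parent_par ?(valP c). Qed.

Lemma under_refl (f : E) : under f f. Proof. exact: below_refl. Qed.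

Lemma under_trans (f g k : E) : under f g -> under g k -> under f k.
Proof. exact: below_trans. Qed.

Lemma underE (q c f : E) : child q c -> under c f = (c == f) || under q f.
Proof. by rewrite child_parent /under => /eqP pc; rewrite belowE pc. Qed.

Lemma child_under (q c : E) : child q c -> under c q.
Proof. by move=> qc; rewrite (underE _ qc) under_refl orbT. Qed.

Lemma not_under_child (q c : E) : child q c -> ~~ under q c.
Proof.
rewrite child_parent /under => /eqP <-.
exact (not_below_parent parent_rho parent_reach (valP c)).
Qed.

Lemma child_neq (q c : E) : child q c -> c != q.
Proof.
by move=> qc; apply: contraNneq (not_under_child qc) => ->; apply: under_refl.
Qed.

Lemma subtree_card_lt (q c : E) : child q c ->
  (#|[set w | under w c]| < #|[set w | under w q]|)%N.
Proof.
move=> qc; apply: proper_card; apply/properP; split.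
  by apply/subsetP => w; rewrite !inE => /under_trans; apply; apply: child_under.
by exists q; rewrite !inE ?under_refl // (negbTE (not_under_child qc)).
Qed.

Lemma child_toward (q w : E) :
  under w q -> w != q -> exists c, child q c && under w c.
Proof.
move=> wq w_q; have [c pc wc] := below_step wq w_q.
have c_rho : c != rho.
  by apply: contra_neq (valP q) => c_rho; rewrite -pc c_rho parent_rho.
by exists (Sub c c_rho); rewrite child_parent /= pc eqxx.
Qed.

Lemma child_toward_uniq (q c1 c2 w : E) : child q c1 -> child q c2 ->
  under w c1 -> under w c2 -> c1 = c2.
Proof.
rewrite !child_parent => /eqP p1 /eqP p2 w1 w2; apply: val_inj.
apply: (below_child_uniq parent_rho parent_reach (valP c1) (valP c2) _ w1 w2).
by rewrite p1 p2.
Qed.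

Lemma pick_child_toward (q c w : E) : child q c -> under w c ->
  [pick c' | child q c' && under w c'] = Some c.
Proof.
move=> qc wc; case: pickP => [c' /andP[qc' wc']|/(_ c)]; last by rewrite qc wc.
by rewrite (child_toward_uniq qc' qc wc' wc).
Qed.

End RootEdgeTree.

Section Relabeling.
Variables (V : finType) (rho : V) (par : V -> V).
Hypothesis T_tree : is_root_edge_tree rho par.
Variables (G : finZmodType) (Lab : finType) (L : G -> Lab).
Hypothesis L_friendly : friendly L.

Local Notation E := (edge rho).
Local Notation child q := (child_edge par (val q)).
Local Notation under := (under par).

Definition consistent_at (h : {ffun E -> G}) (w : E) : bool :=
  interior_vertex rho par (val w) ==> (h w == \sum_(f | child w f) h f).

Lemma consistentP (h : {ffun E -> G}) :
  reflect (forall w, consistent_at h w) (consistent par h).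
Proof. exact: forallP. Qed.

Lemma eq_consistent_at (h1 h2 : {ffun E -> G}) (w : E) : h1 w = h2 w ->
  (forall f, child w f -> h1 f = h2 f) -> consistent_at h1 w = consistent_at h2 w.
Proof. by move=> w12 f12; rewrite /consistent_at w12 (eq_bigr _ f12). Qed.

Definition graft (q : E) (hs : E -> {ffun E -> G}) (h : {ffun E -> G}) :
  {ffun E -> G} :=
  [ffun w => if [pick c | child q c && under w c] is Some c then hs c w else h w].

Lemma graft_in (q : E) (hs : E -> {ffun E -> G}) (h : {ffun E -> G}) (c w : E) :
  child q c -> under w c -> graft q hs h w = hs c w.
Proof. by move=> qc wc; rewrite ffunE (pick_child_toward T_tree qc wc). Qed.

Lemma graft_top (q : E) (hs : E -> {ffun E -> G}) (h : {ffun E -> G}) :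
  graft q hs h q = h q.
Proof.
rewrite ffunE; case: pickP => [c /andP[qc qc']|//].
by move: (not_under_child T_tree qc); rewrite qc'.
Qed.

Lemma consistent_at_graft_in (q : E) (hs : E -> {ffun E -> G}) (h : {ffun E -> G})
    (c w : E) : child q c -> under w c ->
  consistent_at (graft q hs h) w = consistent_at (hs c) w.
Proof.
move=> qc wc; apply: eq_consistent_at => [|f wf]; first exact: graft_in.
by apply: graft_in qc _; apply: under_trans (child_under wf) wc.
Qed.

Lemma consistent_at_graft_top (q : E) (hs : E -> {ffun E -> G}) (h : {ffun E -> G}) :
  (forall c, child q c -> hs c c = h c) ->
  consistent_at (graft q hs h) q = consistent_at h q.
Proof.
move=> hs_c; apply: eq_consistent_at => [|c qc]; first by rewrite graft_top.
by rewrite (graft_in _ _ qc (under_refl par c)) hs_c.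
Qed.

Definition paste (e : E) (hin hout : {ffun E -> G}) : {ffun E -> G} :=
  [ffun w => if under w e then hin w else hout w].

Lemma paste_consistent (e : E) (hin hout : {ffun E -> G}) :
  (forall w, under w e -> consistent_at hin w) ->
  consistent par hout -> hin e = hout e -> consistent par (paste e hin hout).
Proof.
move=> hin_cons /consistentP hout_cons e_eq; apply/consistentP => w.
case: (boolP (under w e)) => we.
  rewrite (@eq_consistent_at _ hin) ?ffunE ?we ?hin_cons // => f wf.
  by rewrite ffunE (under_trans (child_under wf) we).
rewrite (@eq_consistent_at _ hout) ?ffunE ?(negbTE we) // => f wf.
by rewrite ffunE (underE _ wf) (negbTE we) orbF; case: eqP => [->|].
Qed.

Lemma relabel_at (w a : E) (h : {ffun E -> G}) x : consistent_at h w ->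
  (a == w) || child w a -> L x = L (h a) ->
  exists g : {ffun E -> G},
    [/\ forall b, L (g b) = L (h b), g a = x & consistent_at g w].
Proof.
move=> hw a_in Lx; case w_int: (interior_vertex rho par (val w)); last first.
  have aw : a = w.
    case/orP: a_in => [/eqP //|wa]; move: w_int.
    by rewrite /interior_vertex (valP w) /= => /negbT/existsPn/(_ a); rewrite wa.
  exists [ffun b => if b == w then x else h b]; split.
  - by move=> b; rewrite ffunE; case: eqP => [->|]; rewrite -?aw.
  - by rewrite ffunE aw eqxx.
  - by rewrite /consistent_at w_int.
have w_ch : exists f : E, child w f.
  by move: w_int; rewrite /interior_vertex => /andP[_ /existsP].
have not_ww : ~~ child w w by apply: contraTN (eqxx w); apply: child_neq.
move/implyP/(_ w_int)/eqP: hw => hw.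
have [g [Lg ga gw]] := friendly_relabel_sum L_friendly not_ww w_ch hw a_in Lx.
by exists g; split => //; apply/implyP => _; apply/eqP.
Qed.

Lemma extend_into_subtree (q : E) (h g : {ffun E -> G}) :
  (forall w, under w q -> consistent_at h w) -> (forall b, L (g b) = L (h b)) ->
  consistent_at g q ->
  exists h' : {ffun E -> G},
    [/\ forall w, under w q -> L (h' w) = L (h w),
        forall w, (w == q) || child q w -> h' w = g w &
        forall w, under w q -> consistent_at h' w].
Proof.
have [n] := ubnP #|[set w | under w q]|.
elim: n q g => // n IH q g size_q h_cons Lg gq.
have hs_ex c : exists hc : {ffun E -> G}, child q c ->
    [/\ forall w, under w c -> L (hc w) = L (h w), hc c = g c &
        forall w, under w c -> consistent_at hc w].
  case qc: (child q c); last by exists h.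
  have cq := child_under qc.
  have c_in : (c == c) || child c c by rewrite eqxx.
  have [gc [Lgc gcc gc_cons]] := relabel_at (h_cons c cq) c_in (Lg c).
  have size_c := leq_trans (subtree_card_lt T_tree qc) (ltnSE size_q).
  have [hc [Lhc hc_gc hc_cons]] :=
    IH c gc size_c (fun w wc => h_cons w (under_trans wc cq)) Lgc gc_cons.
  by exists hc => _; split; rewrite // hc_gc ?eqxx.
have [hs hs_spec] := fin_all_exists hs_ex.
exists (graft q hs g); split.
- move=> w wq; case: (eqVneq w q) => [->|w_q]; first by rewrite graft_top.
  have [c /andP[qc wc]] := child_toward wq w_q.
  by have [Lhc _ _] := hs_spec c qc; rewrite (graft_in _ _ qc wc) Lhc.
- move=> w /orP[/eqP ->|qw]; first by rewrite graft_top.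
  by have [_ hcc _] := hs_spec w qw; rewrite (graft_in _ _ qw (under_refl par w)).
- move=> w wq; case: (eqVneq w q) => [->|w_q].
    by rewrite consistent_at_graft_top // => c qc; have [_ -> _] := hs_spec c qc.
  have [c /andP[qc wc]] := child_toward wq w_q.
  have [_ _ hc_cons] := hs_spec c qc.
  by rewrite (consistent_at_graft_in _ _ qc wc) hc_cons.
Qed.

(* Induction on the depth of [v]: friendliness at the upper vertex of [v]
   moves the change to the parent edge [q], which the induction hypothesis
   absorbs, and the subtree of [q] is then rebuilt by [extend_into_subtree]. *)
Lemma relabel_edge (v : E) (h : {ffun E -> G}) x :
  consistent par h -> L x = L (h v) ->
  exists h' : {ffun E -> G},
    [/\ consistent par h', forall w, L (h' w) = L (h w) & h' v = x].
Proof.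
move=> /consistentP h_cons.
have [k] := parent_reach T_tree (val v); elim: k v x => [|k IH] v x.
  by move=> /= v_rho; move: (valP v); rewrite /= v_rho eqxx.
rewrite iterSr => vk Lx; case: (eqVneq (parent rho par (val v)) rho) => [pv|pv_rho].
  have all_under w : under w v := below_root_child T_tree (valP v) pv (valP w).
  have v_in : (v == v) || child v v by rewrite eqxx.
  have [g [Lg gv g_cons]] := relabel_at (h_cons v) v_in Lx.
  have [h' [Lh' h'g h'_cons]] := extend_into_subtree (fun w _ => h_cons w) Lg g_cons.
  exists h'; split; rewrite -?gv ?h'g ?eqxx //.
  - by apply/consistentP => w; apply: h'_cons.
  - by move=> w; apply: Lh'.
pose q : E := Sub (parent rho par (val v)) pv_rho.
have qv : child q v by rewrite child_parent.
have v_in : (v == q) || child q v by rewrite qv orbT.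
have [g [Lg gv gq]] := relabel_at (h_cons q) v_in Lx.
have [h1 [h1_cons Lh1 h1q]] := IH q (g q) vk (Lg q).
have Lgh1 b : L (g b) = L (h1 b) by rewrite Lg Lh1.
move/consistentP: (h1_cons) => h1_cons'.
have [hq [Lhq hq_g hq_cons]] := extend_into_subtree (fun w _ => h1_cons' w) Lgh1 gq.
exists (paste q hq h1); split.
- by apply: paste_consistent; rewrite // hq_g ?eqxx.
- by move=> w; rewrite ffunE -Lh1; case: ifP => // /Lhq.
- by rewrite ffunE (child_under qv) hq_g ?qv ?orbT.
Qed.

Lemma splice_consistent (e : E) (lam1 lam2 : {ffun E -> Lab}) :
  lam1 \in consistent_labelings rho par L -> lam2 \in consistent_labelings rho par L ->
  lam1 e = lam2 e -> splice par e lam1 lam2 \in consistent_labelings rho par L.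
Proof.
rewrite !inE => /existsP[h1 /andP[h1_cons /eqP->]] /existsP[h2 /andP[h2_cons /eqP->]].
rewrite !ffunE => Le; apply/existsP.
case: (boolP (fconnect par rho (val e))) => [rho_e|rho_e].
  by exists h1; rewrite splice_degenerate // h1_cons eqxx.
have [h'' [h''_cons Lh'' h''e]] := relabel_edge h2_cons Le.
move/consistentP: h1_cons => h1_cons.
exists (paste e h1 h''); rewrite paste_consistent //=.
apply/eqP/ffunP => f; rewrite !ffunE (belowb_under _ rho_e).
by case: ifP; rewrite ?Lh''.
Qed.

End Relabeling.

Section ToricMap.
Variables (G : finZmodType) (Lab : finType) (L : G -> Lab).
Variables (V : finType) (rho : V) (par : V -> V).

Lemma toric_mapB (p q : {mpoly CC[nq rho par L]}) :
  toric_map (p - q) = toric_map p - toric_map q.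
Proof. exact: rmorphB. Qed.

Lemma toric_mapM (p q : {mpoly CC[nq rho par L]}) :
  toric_map (p * q) = toric_map p * toric_map q.
Proof. exact: rmorphM. Qed.

Lemma toric_map_qvar (lam : imT rho par L) :
  toric_map (qvar lam) = \prod_(e : edge rho) avar e (val lam e).
Proof. by rewrite /toric_map /qvar mmapX mmap1U enum_rankK. Qed.

End ToricMap.

Theorem lemma4p2 (G : finZmodType) (Lab : finType) (L : G -> Lab)
  (V : finType) (rho : V) (par : V -> V) (e : edge rho)
  (lam1 lam2 : imT rho par L) :
  friendly L ->
  is_root_edge_tree rho par ->
  interior_edge par e ->
  val lam1 e = val lam2 e ->
  exists (H12 : splice par e (val lam1) (val lam2) \in consistent_labelings rho par L)
         (H21 : splice par e (val lam2) (val lam1) \in consistent_labelings rho par L),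
    in_toric_ideal
      (qvar lam1 * qvar lam2
       - qvar (exist (fun lam => lam \in consistent_labelings rho par L) _ H12)
         * qvar (exist (fun lam => lam \in consistent_labelings rho par L) _ H21)).
Proof.
move=> L_friendly T_tree _ lam12.
exists (splice_consistent T_tree L_friendly (valP lam1) (valP lam2) lam12).
exists (splice_consistent T_tree L_friendly (valP lam2) (valP lam1) (esym lam12)).
rewrite /in_toric_ideal toric_mapB !toric_mapM !toric_map_qvar /=.
rewrite -!big_split /=; apply/eqP; rewrite subr_eq0; apply/eqP/eq_bigr => f _.
by rewrite !ffunE; case: belowb => //; apply: mulrC.
Qed.
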